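(* For the games $\mathcal G$ and $\mathcal G^{\rm sm}$: (a) a GNE of $\mathcal G$ always exists; (b) a GNE of $\mathcal G^{\rm sm}$ exists provided $\mathcal P\neq\emptyset$; (c) if $\mathbf x^\star$ is a GNE of $\mathcal G$ satisfying constraint (C$_q$) for all $q=1,\dots,Q$, then $\mathbf x^\star$ is a GNE of $\mathcal G^{\rm sm}$; (d) if $\mathbf x^\star$ is a GNE of $\mathcal G^{\rm sm}$, then $\mathbf x^\star$ is a GNE of $\mathcal G$.
   Context: Fix integers $Q,J\ge1$, noise power $\sigma^2>0$, budgets $P_q>0$ ($q=1,\dots,Q$) and $P^{J}_j>0$ ($j=1,\dots,J$), and positive channel gains $H^{SD}_{qq},H^{SE}_{qe},H^{JD}_{jq},H^{JE}_{je}$. Variables: $p_q\ge0$ (power of source $q$) and $p^J_{jq}\ge0$ (power of jammer $j$ on the channel of user $q$); $\mathbf p^J_q=(p^J_{jq})_{j=1}^J$, $\mathbf x_q=(p_q,\mathbf p^J_q)$, $\mathbf x=(\mathbf x_q)_{q=1}^Q$, $\mathbf p^J_{-q}=(\mathbf p^J_r)_{r\ne q}$. Define $r_{qq}(\mathbf x_q)=\log\big(1+\frac{H^{SD}_{qq}p_q}{\sigma^2+\sum_jH^{JD}_{jq}p^J_{jq}}\big)$, $r_{qe}(\mathbf x_q)=\log\big(1+\frac{H^{SE}_{qe}p_q}{\sigma^2+\sum_jH^{JE}_{je}p^J_{jq}}\big)$, $\tilde r^s_q=r_{qq}-r_{qe}$, $r^s_q=\max(0,\tilde r^s_q)$. Constraint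 (C$_q$): $\sum_{j=1}^J(H^{SD}_{qq}H^{JE}_{je}-H^{SE}_{qe}H^{JD}_{jq})p^J_{jq}+(H^{SD}_{qq}-H^{SE}_{qe})\sigma^2\ge0$. $\mathcal P_q(\mathbf p^J_{-q})=\{\mathbf x_q\ge\mathbf 0: p_q\le P_q,\ \sum_{r=1}^Qp^J_{jr}\le P^J_j\ \forall j\}$ (with $p^J_{jr}$, $r\neq q$, fixed by $\mathbf p^J_{-q}$); $\mathcal P^{\rm sm}_q(\mathbf p^J_{-q})=\{\mathbf x_q\in\mathcal P_q(\mathbf p^J_{-q}):\text{(C}_q\text{) holds}\}$; $\mathcal P=\{\mathbf x\ge\mathbf 0: p_q\le P_q \text{ and (C}_q\text{) for all }q,\ \sum_{r}p^J_{jr}\le P^J_j\ \forall j\}$. Game $\mathcal G$: player $q$ maximizes $r^s_q(\mathbf x_q)$ over $\mathbf x_q\in\mathcal P_q(\mathbf p^J_{-q})$; game $\mathcal G^{\rm sm}$: player $q$ maximizes $\tilde r^s_q(\mathbf x_q)$ over $\mathcal P^{\rm sm}_q(\mathbf p^J_{-q})$. A GNE of $\mathcal G$ is $\mathbf x^\star$ such that for all $q$: $\mathbf x^\star_q\in\mathcal P_q(\mathbf p^{J\star}_{-q})$ and $r^s_q(\mathbf x^\star_q)\ge r^s_q(\mathbf x_q)$ for all $\mathbf x_q\in\mathcal P_q(\mathbf p^{J\star}_{-q})$. A GNE of $\mathcal G^{\rm sm}$ is defined analogously with $\tilde r^s_q$ and $\mathcal P^{\rm sm}_q$. *)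

From Stdlib Require Import Reals Lra Arith.
Open Scope R_scope.

(* Indices are 0-based: users q = 0..Q-1, jammers j = 0..J-1. *)
Fixpoint sumR (n : nat) (f : nat -> R) : R :=
  match n with O => 0 | S m => sumR m f + f m end.

Record sys := mkSys {
  Q : nat; J : nat;
  sigma2 : R;
  Pmax : nat -> R;
  PJmax : nat -> R;
  HSD : nat -> R;
  HSE : nat -> R;
  HJD : nat -> nat -> R;    (* HJD j q = H^JD_jq *)
  HJE : nat -> R
}.

(* A strategy of player q is x_q = (a, b) with a = p_q, b j = p^J_{jq}.
   A profile is (p, pJ) with pJ j q = p^J_{jq}. *)
Definition r_qq (s : sys) (q : nat) (a : R) (b : nat -> R) : R :=
  ln (1 + HSD s q * a / (sigma2 s + sumR (J s) (fun j => HJD s j q * b j))).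
Definition r_qe (s : sys) (q : nat) (a : R) (b : nat -> R) : R :=
  ln (1 + HSE s q * a / (sigma2 s + sumR (J s) (fun j => HJE s j * b j))).
Definition rs_tilde (s : sys) q a b : R := r_qq s q a b - r_qe s q a b.
Definition rs (s : sys) q a b : R := Rmax 0 (rs_tilde s q a b).

Definition Cq (s : sys) (q : nat) (b : nat -> R) : Prop :=
  sumR (J s) (fun j => (HSD s q * HJE s j - HSE s q * HJD s j q) * b j)
  + (HSD s q - HSE s q) * sigma2 s >= 0.

Definition feas (s : sys) (pJ : nat -> nat -> R) (q : nat) (a : R) (b : nat -> R) : Prop :=
  0 <= a /\ a <= Pmax s q /\
  (forall j, (j < J s)%nat ->
     0 <= b j /\
     sumR (Q s) (fun r => if Nat.eqb r q then b j else pJ j r) <= PJmax s j).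

Definition feas_sm (s : sys) pJ q a b : Prop := feas s pJ q a b /\ Cq s q b.

Definition in_P (s : sys) (p : nat -> R) (pJ : nat -> nat -> R) : Prop :=
  (forall q, (q < Q s)%nat -> 0 <= p q /\ p q <= Pmax s q /\ Cq s q (fun j => pJ j q)) /\
  (forall j, (j < J s)%nat ->
     (forall r, (r < Q s)%nat -> 0 <= pJ j r) /\ sumR (Q s) (pJ j) <= PJmax s j).

Definition GNE_G (s : sys) (p : nat -> R) (pJ : nat -> nat -> R) : Prop :=
  forall q, (q < Q s)%nat ->
    feas s pJ q (p q) (fun j => pJ j q) /\
    forall a b, feas s pJ q a b -> rs s q a b <= rs s q (p q) (fun j => pJ j q).

Definition GNE_Gsm (s : sys) (p : nat -> R) (pJ : nat -> nat -> R) : Prop :=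
  forall q, (q < Q s)%nat ->
    feas_sm s pJ q (p q) (fun j => pJ j q) /\
    forall a b, feas_sm s pJ q a b ->
      rs_tilde s q a b <= rs_tilde s q (p q) (fun j => pJ j q).

Definition admissible (s : sys) : Prop :=
  (1 <= Q s)%nat /\ (1 <= J s)%nat /\ 0 < sigma2 s /\
  (forall q, (q < Q s)%nat -> 0 < Pmax s q /\ 0 < HSD s q /\ 0 < HSE s q) /\
  (forall j, (j < J s)%nat -> 0 < PJmax s j /\ 0 < HJE s j /\
     forall q, (q < Q s)%nat -> 0 < HJD s j q).

(* For a fixed jamming vector, a user's secrecy rate is the gap
   [ln (1 + al a) - ln (1 + be a)] between the legitimate link (effective gain
   [al]) and the eavesdropping link ([be]); constraint (C_q) says exactly
   [be <= al].  Transmitting at full power is therefore optimal (for the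
   positive part of the gap always, for the gap itself under (C_q)).  What
   remains is a game between the users' jamming vectors, coupled only by the
   jammers' shared budgets: it is a potential game whose potential is the sum
   of the full-power rates, so a maximizer of the potential over the compact
   set of feasible jamming profiles is an equilibrium.  This gives (a) and,
   adding the constraints (C_q), (b).  Items (c) and (d) follow by comparing
   [rs = max 0 rs_tilde] with [rs_tilde]: under (C_q) the rate is
   nonnegative, and a deviation with a positive rate satisfies (C_q). *)

From Stdlib Require Import Reals Lra Lia.
From mathcomp Require Import all_boot all_algebra.
From mathcomp Require Import boolp classical_sets reals topology normedtype.
From mathcomp Require Import matrix_normedtype derive Rstruct Rstruct_topology.
Import GRing.Theory Num.Theory.
Open Scope R_scope.

Lemma sumR_ext n f g : (forall j, (j < n)%coq_nat -> f j = g j) -> sumR n f = sumR n g.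
Proof.
elim: n => [|n IH] efg //=.
by rewrite IH ?efg //; move=> j ?; apply: efg; lia.
Qed.

Lemma sumR_zero n : sumR n (fun _ => 0) = 0.
Proof. by elim: n => [|n IH] //=; rewrite IH; lra. Qed.

Lemma sumR_nonneg n f : (forall j, (j < n)%coq_nat -> 0 <= f j) -> 0 <= sumR n f.
Proof.
elim: n => [|n IH] f_ge0 /=; first lra.
have := IH (fun j hj => f_ge0 j ltac:(lia)); have := f_ge0 n ltac:(lia); lra.
Qed.

Lemma sumR_ge_term n f q : (forall j, (j < n)%coq_nat -> 0 <= f j) ->
  (q < n)%coq_nat -> f q <= sumR n f.
Proof.
elim: n => [|n IH] f_ge0 hq /=; first lia.
have fn_ge0 := f_ge0 n ltac:(lia).
have [->|hqn] := Nat.eq_dec q n.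
  by have := sumR_nonneg n f (fun j hj => f_ge0 j ltac:(lia)); lra.
by have := IH (fun j hj => f_ge0 j ltac:(lia)) ltac:(lia); lra.
Qed.

Lemma sumR_update n f q u : (q < n)%coq_nat ->
  sumR n (fun r => if Nat.eqb r q then u else f r) = sumR n f - f q + u.
Proof.
elim: n => [|n IH] hq /=; first lia.
have [->|hqn] := Nat.eq_dec q n.
  rewrite Nat.eqb_refl (sumR_ext _ _ f); first lra.
  by move=> j hj; case: Nat.eqb_spec => // ?; lia.
rewrite IH; last lia.
by case: Nat.eqb_spec => [?|_]; [lia | lra].
Qed.

Lemma sumR_lin n c d f g b :
  sumR n (fun j => (c * f j - d * g j) * b j) =
  c * sumR n (fun j => f j * b j) - d * sumR n (fun j => g j * b j).
Proof. by elim: n => [|n IH] /=; [ring | rewrite IH; ring]. Qed.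

Definition gap (al be a : R) : R := ln (1 + al * a) - ln (1 + be * a).

Lemma gap0 al be : gap al be 0 = 0.
Proof. by rewrite /gap !Rmult_0_r Rplus_0_r; lra. Qed.

Lemma ln_le x y : 0 < x -> x <= y -> ln x <= ln y.
Proof. by move=> x_gt0 [/(ln_increasing _ _ x_gt0)|->]; lra. Qed.

Lemma gap_mono al be a a' : 0 <= be <= al -> 0 <= a <= a' ->
  gap al be a <= gap al be a'.
Proof.
move=> hbe ha.
have pos x y : 0 <= x -> 0 <= y -> 0 < 1 + x * y by move=> *; nra.
have : ln ((1 + al * a) * (1 + be * a')) <= ln ((1 + al * a') * (1 + be * a)).
  apply: ln_le; first by apply: Rmult_lt_0_compat; apply: pos; lra.
  have : 0 <= (al - be) * (a' - a) by apply: Rmult_le_pos; lra.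
  nra.
rewrite /gap !ln_mult; try (apply: pos; lra); lra.
Qed.

Lemma gap_nonpos al be a : 0 <= al <= be -> 0 <= a -> gap al be a <= 0.
Proof.
move=> hal ha.
have : ln (1 + al * a) <= ln (1 + be * a) by apply: ln_le; nra.
rewrite /gap; lra.
Qed.

Lemma gap_pos al be a : 0 <= al -> 0 <= a -> 0 < gap al be a -> be < al.
Proof.
move=> hal ha hpos; apply: Rnot_le_lt => hle.
by have := gap_nonpos al be a (conj hal hle) ha; lra.
Qed.

Lemma gap_pos_part_mono al be a a' : 0 <= al -> 0 <= be -> 0 <= a <= a' ->
  Rmax 0 (gap al be a) <= Rmax 0 (gap al be a').
Proof.
move=> hal hbe ha; have [hle|hlt] := Rle_lt_dec be al.
  apply: Rle_max_compat_l; exact: gap_mono.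
rewrite Rmax_left; first exact: Rmax_l.
apply: gap_nonpos; lra.
Qed.

Definition deviate (x : nat -> nat -> R) (q : nat) (b : nat -> R) : nat -> nat -> R :=
  fun r => if Nat.eqb r q then b else x r.

Definition potential (Q : nat) (u : nat -> (nat -> R) -> R) (x : nat -> nat -> R) : R :=
  sumR Q (fun q => u q (x q)).

Lemma potential_maximizer_stable Q u (K : (nat -> nat -> R) -> Prop) x q b :
  (forall y, K y -> potential Q u y <= potential Q u x) ->
  (q < Q)%coq_nat -> K (deviate x q b) -> u q b <= u q (x q).
Proof.
move=> xmax hq Kdev; have := xmax _ Kdev.
rewrite /potential /deviate.
rewrite (sumR_ext _ _ (fun r => if Nat.eqb r q then u q b else u r (x r))).
  by rewrite sumR_update //; lra.
by move=> r _; case: Nat.eqb_spec => // ->.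
Qed.

(** A profile [x q j] ([q < Q], [j < J]) is packed
    into a row vector of ['rV[R]_(Q * J)]; a set of profiles that is closed and
    bounded in these coordinates is compact, so a function of profiles that is
    continuous in them attains its maximum on it (extreme value theorem). *)

Section ProfileMaximum.
Variables Q J : nat.

Definition agree (x y : nat -> nat -> R) : Prop :=
  forall q j, (q < Q)%coq_nat -> (j < J)%coq_nat -> x q j = y q j.

Local Open Scope classical_set_scope.
Local Open Scope ring_scope.

Definition unpack (r : 'rV[R]_(Q * J)) : nat -> nat -> R :=
  fun q j => \sum_(i < Q * J | nat_of_ord i == (q * J + j)%N) r ord0 i.

Definition pack (x : nat -> nat -> R) : 'rV[R]_(Q * J) :=
  \row_(i < Q * J) x (i %/ J)%N (i %% J)%N.

Lemma unpack_index (r : 'rV[R]_(Q * J)) (k : 'I_(Q * J)) q j :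
  nat_of_ord k = (q * J + j)%N -> unpack r q j = r ord0 k.
Proof. by move=> hk; rewrite /unpack (big_pred1 k) // => i /=; rewrite -hk. Qed.

Lemma unpack_coord (r : 'rV[R]_(Q * J)) (k : 'I_(Q * J)) :
  unpack r (k %/ J)%N (k %% J)%N = r ord0 k.
Proof. by apply: unpack_index; rewrite -divn_eq. Qed.

Lemma unpack_pack x : agree (unpack (pack x)) x.
Proof.
move=> q j /ssrnat.ltP hq /ssrnat.ltP hj.
have hk : (q * J + j < Q * J)%N.
  apply: (@leq_trans (q.+1 * J)); first by rewrite mulSn addnC ltn_add2r.
  by rewrite leq_mul2r hq orbT.
rewrite (@unpack_index _ (Ordinal hk)) // mxE /=.
have J_gt0 : (0 < J)%N by apply: leq_ltn_trans hj.
by rewrite divnMDl // divn_small // addn0 modnMDl modn_small.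
Qed.

Definition pcontinuous (F : (nat -> nat -> R) -> R) : Prop :=
  continuous (fun r : 'rV[R]_(Q * J) => F (unpack r)).

Lemma pcontinuous_cst c : pcontinuous (fun _ => c).
Proof. by move=> r; exact: cst_continuous. Qed.

Lemma pcontinuous_coord q j : pcontinuous (fun x => x q j).
Proof.
apply: continuous_big; first by have := @add_continuous R^o.
by move=> i _; exact: coord_continuous.
Qed.

Lemma pcontinuous_add F G : pcontinuous F -> pcontinuous G ->
  pcontinuous (fun x => Rplus (F x) (G x)).
Proof. by move=> hF hG r; exact: (@continuousD _ R^o _ _ _ _ (hF r) (hG r)). Qed.

Lemma pcontinuous_sub F G : pcontinuous F -> pcontinuous G ->
  pcontinuous (fun x => Rminus (F x) (G x)).
Proof. by move=> hF hG r; exact: (@continuousB _ R^o _ _ _ _ (hF r) (hG r)). Qed.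

Lemma pcontinuous_mul F G : pcontinuous F -> pcontinuous G ->
  pcontinuous (fun x => Rmult (F x) (G x)).
Proof. by move=> hF hG r; exact: (@continuousM R _ _ _ r (hF r) (hG r)). Qed.

Lemma pcontinuous_inv F : pcontinuous F -> (forall x, F x <> 0) ->
  pcontinuous (fun x => Rinv (F x)).
Proof.
move=> hF hne r; have hr : F (unpack r) != 0 by apply/eqP/hne.
exact: (@continuousV R _ (fun r => F (unpack r)) r hr (hF r)).
Qed.

Lemma pcontinuous_abs F : pcontinuous F -> pcontinuous (fun x => Rabs (F x)).
Proof.
move=> hF r; under eq_fun => y do rewrite RabsE.
exact: (continuous_comp (hF r) (@norm_continuous _ R^o _)).
Qed.

Lemma pcontinuous_ln F : pcontinuous F -> (forall x, Rlt 0 (F x)) ->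
  pcontinuous (fun x => ln (F x)).
Proof.
move=> hF hpos r; apply: (continuous_comp (hF r)).
apply/continuity_pt_cvg/derivable_continuous_pt.
exists (/ F (unpack r))%R; exact: derivable_pt_lim_ln.
Qed.

Lemma pcontinuous_max F G : pcontinuous F -> pcontinuous G ->
  pcontinuous (fun x => Rmax (F x) (G x)).
Proof.
move=> hF hG r; under eq_fun => y do rewrite RmaxE.
exact: (@continuous_max _ _ (fun r => F (unpack r)) (fun r => G (unpack r)) r (hF r) (hG r)).
Qed.

Lemma pcontinuous_sumR n (F : nat -> (nat -> nat -> R) -> R) :
  (forall k, (k < n)%coq_nat -> pcontinuous (F k)) ->
  pcontinuous (fun x => sumR n (fun k => F k x)).
Proof.
elim: n => [|n IH] hF /=; first exact: pcontinuous_cst.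
apply: pcontinuous_add; last by apply: hF; lia.
by apply: IH => k hk; apply: hF; lia.
Qed.

Lemma closed_le F G : pcontinuous F -> pcontinuous G ->
  closed [set r : 'rV[R]_(Q * J) | Rle (F (unpack r)) (G (unpack r))].
Proof.
move=> hF hG.
have -> : [set r : 'rV[R]_(Q * J) | Rle (F (unpack r)) (G (unpack r))] =
    (fun r => G (unpack r) - F (unpack r)) @^-1` [set y : R | 0 <= y].
  by apply/seteqP; split => r /=; rewrite subr_ge0 => /RleP.
apply: preimage_closed; last exact: closed_ge.
by move=> r _; exact: (@continuousB _ R^o _ _ _ _ (hG r) (hF r)).
Qed.

Lemma closed_ge F G : pcontinuous F -> pcontinuous G ->
  closed [set r : 'rV[R]_(Q * J) | Rge (F (unpack r)) (G (unpack r))].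
Proof.
move=> hF hG.
have -> : [set r : 'rV[R]_(Q * J) | Rge (F (unpack r)) (G (unpack r))] =
    [set r | Rle (G (unpack r)) (F (unpack r))].
  by apply/seteqP; split=> r /=; [exact: Rge_le | exact: Rle_ge].
exact: closed_le.
Qed.

Lemma closed_and (S T : 'rV[R]_(Q * J) -> Prop) :
  closed [set r | S r] -> closed [set r | T r] -> closed [set r | S r /\ T r].
Proof. exact: closedI. Qed.

Lemma closed_forall (I : Type) (P : I -> 'rV[R]_(Q * J) -> Prop) :
  (forall k, closed [set r | P k r]) -> closed [set r | forall k, P k r].
Proof.
move=> hP; have -> : [set r | forall k, P k r] = \bigcap_(k in setT) [set r | P k r].
  by apply/seteqP; split=> r /= H k; [move=> _; exact: H | exact: (H k Logic.I)].
by apply: closed_bigI => k _; exact: hP.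
Qed.

Lemma closed_imp (P : Prop) (S : 'rV[R]_(Q * J) -> Prop) :
  closed [set r | S r] -> closed [set r | P -> S r].
Proof.
move=> hS; have [HP|HnP] := pselect P.
  by have -> : [set r | P -> S r] = [set r | S r] by apply/seteqP; split=> r /=; auto.
by have -> : [set r | P -> S r] = setT by apply/seteqP; split=> r //= _ /HnP.
Qed.

Lemma profile_max (K : (nat -> nat -> R) -> Prop) (F : (nat -> nat -> R) -> R)
    (hi : nat -> R) :
  pcontinuous F -> closed [set r | K (unpack r)] ->
  (forall x y, agree x y -> K x -> K y) -> (forall x y, agree x y -> F x = F y) ->
  (forall x q j, K x -> (q < Q)%coq_nat -> (j < J)%coq_nat ->
     Rle 0 (x q j) /\ Rle (x q j) (hi j)) ->
  (exists x, K x) -> exists x, K x /\ forall y, K y -> Rle (F y) (F x).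
Proof.
move=> hF hK Kagree Fagree Kbox [x0 Kx0].
have packK x : K x -> K (unpack (pack x)).
  by move=> Kx; apply: Kagree Kx => q j hq hj; rewrite unpack_pack.
have Kcompact : compact [set r | K (unpack r)].
  apply: (subclosed_compact hK (rV_compact (fun i => @segment_compact R 0 (hi (i %% J)%N)))).
  move=> r /= Kr i; rewrite /= in_itv /=.
  have J_gt0 : (0 < J)%N.
    move: (nat_of_ord i) (ltn_ord i) => k hk.
    by rewrite lt0n; apply: contraTneq hk => ->; rewrite muln0.
  have hq : ((i %/ J) < Q)%coq_nat by apply/ssrnat.ltP; rewrite ltn_divLR.
  have hj : ((i %% J) < J)%coq_nat by apply/ssrnat.ltP; rewrite ltn_mod.
  have [h0 hhi] := Kbox _ _ _ Kr hq hj; rewrite unpack_coord in h0 hhi.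
  by apply/andP; split; apply/RleP.
have [c Kc cmax] := @EVT_max_rV R _ (fun r => F (unpack r)) _
  (ex_intro _ _ (packK _ Kx0)) Kcompact (continuous_subspaceT hF).
move: Kc; rewrite inE => Kc; exists (unpack c); split => // y Ky.
rewrite -(Fagree _ _ (unpack_pack y)); apply/RleP/cmax.
by rewrite inE; exact: packK.
Qed.

End ProfileMaximum.

Section JammingGame.
Variable s : sys.
Hypothesis Hs : admissible s.

Definition nonneg (b : nat -> R) : Prop := forall j, (j < J s)%coq_nat -> 0 <= b j.

Definition noiseD (q : nat) (b : nat -> R) : R :=
  sigma2 s + sumR (J s) (fun j => HJD s j q * b j).
Definition noiseE (b : nat -> R) : R :=
  sigma2 s + sumR (J s) (fun j => HJE s j * b j).

Definition alpha (q : nat) (b : nat -> R) : R := HSD s q / noiseD q b.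
Definition beta (q : nat) (b : nat -> R) : R := HSE s q / noiseE b.

Lemma noiseD_pos q b : (q < Q s)%coq_nat -> nonneg b -> 0 < noiseD q b.
Proof.
move: Hs => [_ [_ [hsig [_ hjam]]]] hq hb.
have : 0 <= sumR (J s) (fun j => HJD s j q * b j).
  apply: sumR_nonneg => j hj; have [_ [_ hD]] := hjam j hj.
  by apply: Rmult_le_pos; [apply: Rlt_le; exact: hD | exact: hb].
rewrite /noiseD; lra.
Qed.

Lemma noiseE_pos b : nonneg b -> 0 < noiseE b.
Proof.
move: Hs => [_ [_ [hsig [_ hjam]]]] hb.
have : 0 <= sumR (J s) (fun j => HJE s j * b j).
  apply: sumR_nonneg => j hj; have [_ [hE _]] := hjam j hj.
  by apply: Rmult_le_pos; [apply: Rlt_le | exact: hb].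
rewrite /noiseE; lra.
Qed.

Lemma alpha_nonneg q b : (q < Q s)%coq_nat -> nonneg b -> 0 <= alpha q b.
Proof.
move=> hq hb; have := noiseD_pos q b hq hb; have [_ [_ [_ [huser _]]]] := Hs.
have [_ [hSD _]] := huser q hq; rewrite /alpha => ?.
by apply: Rlt_le; apply: Rdiv_lt_0_compat.
Qed.

Lemma beta_nonneg q b : (q < Q s)%coq_nat -> nonneg b -> 0 <= beta q b.
Proof.
move=> hq hb; have := noiseE_pos b hb; have [_ [_ [_ [huser _]]]] := Hs.
have [_ [_ hSE]] := huser q hq; rewrite /beta => ?.
by apply: Rlt_le; apply: Rdiv_lt_0_compat.
Qed.

Lemma rs_tilde_gap q a b : rs_tilde s q a b = gap (alpha q b) (beta q b) a.
Proof.
rewrite /rs_tilde /r_qq /r_qe /gap /alpha /beta /noiseD /noiseE.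
by rewrite /Rdiv !Rmult_assoc (Rmult_comm a) (Rmult_comm a).
Qed.

Lemma rs_tilde_agree q a b b' : (forall j, (j < J s)%coq_nat -> b j = b' j) ->
  rs_tilde s q a b = rs_tilde s q a b'.
Proof.
move=> hbb'; rewrite /rs_tilde /r_qq /r_qe.
rewrite (sumR_ext _ (fun j => HJD s j q * b j) (fun j => HJD s j q * b' j)).
  by rewrite (sumR_ext _ (fun j => HJE s j * b j) (fun j => HJE s j * b' j)) // => j hj;
    rewrite hbb'.
by move=> j hj; rewrite hbb'.
Qed.

Lemma Cq_iff q b : (q < Q s)%coq_nat -> nonneg b -> Cq s q b <-> beta q b <= alpha q b.
Proof.
move=> hq hb; have hD := noiseD_pos q b hq hb; have hE := noiseE_pos b hb.
rewrite /Cq; have -> : sumR (J s) (fun j => (HSD s q * HJE s j - HSE s q * HJD s j q) * b j)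
    + (HSD s q - HSE s q) * sigma2 s
    = (alpha q b - beta q b) * (noiseD q b * noiseE b).
  rewrite sumR_lin /alpha /beta; move: hD hE; rewrite /noiseD /noiseE => hD hE.
  by field; split; apply: Rgt_not_eq.
have hDE : 0 < noiseD q b * noiseE b by apply: Rmult_lt_0_compat.
split=> [hC | hle].
  apply: Rnot_lt_le => hlt; move/Rge_le: hC; apply: Rlt_not_le.
  by apply: Rmult_neg_pos => //; lra.
by apply: Rle_ge; apply: Rmult_le_pos => //; lra.
Qed.

(* Rates at full transmit power, evaluated on [|b|] so that they are defined
   and continuous on the whole coordinate space; [util_sm] is the utility of
   the modified game and [util] (its positive part) that of the original one. *)
Definition util_sm (q : nat) (b : nat -> R) : R :=
  rs_tilde s q (Pmax s q) (fun j => Rabs (b j)).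
Definition util (q : nat) (b : nat -> R) : R := Rmax 0 (util_sm q b).

Lemma util_sm_nonneg q b : nonneg b -> util_sm q b = rs_tilde s q (Pmax s q) b.
Proof.
by move=> hb; apply: rs_tilde_agree => j hj; apply: Rabs_right; apply: Rle_ge; exact: hb.
Qed.

Lemma util_sm_agree q b b' : (forall j, (j < J s)%coq_nat -> b j = b' j) ->
  util_sm q b = util_sm q b'.
Proof. by move=> hbb'; apply: rs_tilde_agree => j hj; rewrite hbb'. Qed.

Lemma pcontinuous_log_sinr c (g : nat -> R) q :
  0 <= c -> (forall j, (j < J s)%coq_nat -> 0 <= g j) ->
  pcontinuous (Q s) (J s)
    (fun x => ln (1 + c / (sigma2 s + sumR (J s) (fun j => g j * Rabs (x q j))))).
Proof.
move=> hc hg; have [_ [_ [hsig _]]] := Hs.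
have hden x : 0 < sigma2 s + sumR (J s) (fun j => g j * Rabs (x q j)).
  have : 0 <= sumR (J s) (fun j => g j * Rabs (x q j)).
    by apply: sumR_nonneg => j hj; apply: Rmult_le_pos; [exact: hg | exact: Rabs_pos].
  lra.
have hcont : pcontinuous (Q s) (J s)
    (fun x => sigma2 s + sumR (J s) (fun j => g j * Rabs (x q j))).
  apply: pcontinuous_add; first exact: pcontinuous_cst.
  apply: pcontinuous_sumR => j _; apply: pcontinuous_mul; first exact: pcontinuous_cst.
  by apply: pcontinuous_abs; exact: pcontinuous_coord.
apply: pcontinuous_ln.
  apply: pcontinuous_add; first exact: pcontinuous_cst.
  apply: pcontinuous_mul; first exact: pcontinuous_cst.
  apply: pcontinuous_inv; first exact: hcont.
  by move=> x; apply: Rgt_not_eq; exact: hden.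
move=> x; have hx := hden x.
have : 0 <= c / (sigma2 s + sumR (J s) (fun j => g j * Rabs (x q j))).
  by apply: Rmult_le_pos => //; apply: Rlt_le; apply: Rinv_0_lt_compat.
lra.
Qed.

Lemma pcontinuous_util_sm q : (q < Q s)%coq_nat ->
  pcontinuous (Q s) (J s) (fun x => util_sm q (x q)).
Proof.
move=> hq; have [_ [_ [_ [huser hjam]]]] := Hs; have [hP [hSD hSE]] := huser q hq.
apply: pcontinuous_sub; apply: pcontinuous_log_sinr.
- by apply: Rmult_le_pos; apply: Rlt_le.
- by move=> j hj; have [_ [_ hD]] := hjam j hj; apply: Rlt_le; exact: hD.
- by apply: Rmult_le_pos; apply: Rlt_le.
- by move=> j hj; have [_ [hE _]] := hjam j hj; apply: Rlt_le.
Qed.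

Lemma pcontinuous_util q : (q < Q s)%coq_nat ->
  pcontinuous (Q s) (J s) (fun x => util q (x q)).
Proof.
move=> hq; apply: (pcontinuous_max _ _ (fun _ => 0)); first exact: pcontinuous_cst.
exact: pcontinuous_util_sm.
Qed.

Lemma util_agree q b b' : (forall j, (j < J s)%coq_nat -> b j = b' j) ->
  util q b = util q b'.
Proof. by move=> hbb'; rewrite /util (util_sm_agree q b b' hbb'). Qed.

(** Jamming profiles [x q j] (power of jammer [j] on the channel of user [q])
    that respect the jammers' budgets, and, when [withC] holds, the
    constraints (C_q) of all users. *)
Definition jam_feasible (withC : Prop) (x : nat -> nat -> R) : Prop :=
  (forall q j, (q < Q s)%coq_nat -> (j < J s)%coq_nat -> 0 <= x q j) /\
  (forall j, (j < J s)%coq_nat -> sumR (Q s) (fun q => x q j) <= PJmax s j) /\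
  (forall q, (q < Q s)%coq_nat -> withC -> Cq s q (x q)).

Lemma jam_feasible_agree withC x y :
  agree (Q s) (J s) x y -> jam_feasible withC x -> jam_feasible withC y.
Proof.
move=> xy [hnn [hbud hC]]; split; [|split].
- by move=> q j hq hj; rewrite -xy //; exact: hnn.
- move=> j hj; rewrite -(sumR_ext _ (fun q => x q j)); first exact: hbud.
  by move=> q hq; rewrite xy.
- move=> q hq hwith; have := hC q hq hwith; rewrite /Cq.
  by rewrite (sumR_ext _ _ (fun j => (HSD s q * HJE s j - HSE s q * HJD s j q) * y q j))
    // => j hj; rewrite xy.
Qed.

(* Feasibility is defined by finitely many non-strict inequalities between
   continuous functions of the profile. *)
Lemma jam_feasible_closed withC :
  closed [set r | jam_feasible withC (unpack (Q s) (J s) r)].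
Proof.
apply: closed_and; [|apply: closed_and].
- apply: (@closed_forall _ _ nat) => q; apply: (@closed_forall _ _ nat) => j.
  do 2 apply: closed_imp.
  exact: (closed_le _ _ _ _ (pcontinuous_cst _ _ 0) (pcontinuous_coord _ _ q j)).
- apply: (@closed_forall _ _ nat) => j; apply: closed_imp.
  apply: (closed_le _ _ (fun x => sumR (Q s) (fun q => x q j)) (fun _ => PJmax s j));
    last exact: pcontinuous_cst.
  by apply: pcontinuous_sumR => q _; exact: pcontinuous_coord.
- apply: (@closed_forall _ _ nat) => q; do 2 apply: closed_imp; rewrite /Cq.
  apply: (closed_ge _ _ (fun x => sumR (J s)
      (fun j => (HSD s q * HJE s j - HSE s q * HJD s j q) * x q j)
      + (HSD s q - HSE s q) * sigma2 s) (fun _ => 0)); last exact: pcontinuous_cst.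
  apply: pcontinuous_add; last exact: pcontinuous_cst.
  apply: pcontinuous_sumR => j _; apply: pcontinuous_mul; first exact: pcontinuous_cst.
  exact: pcontinuous_coord.
Qed.

Lemma jam_feasible_box withC x q j : jam_feasible withC x ->
  (q < Q s)%coq_nat -> (j < J s)%coq_nat -> 0 <= x q j /\ x q j <= PJmax s j.
Proof.
move=> [hnn [hbud _]] hq hj; split; first exact: hnn.
apply: Rle_trans (hbud j hj); apply: (sumR_ge_term _ (fun r => x r j)) => // r hr.
exact: hnn.
Qed.

Lemma potential_maximizer withC (u : nat -> (nat -> R) -> R) :
  (forall q, (q < Q s)%coq_nat -> pcontinuous (Q s) (J s) (fun x => u q (x q))) ->
  (forall q b b', (forall j, (j < J s)%coq_nat -> b j = b' j) -> u q b = u q b') ->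
  (exists x, jam_feasible withC x) ->
  exists x, jam_feasible withC x /\
    forall y, jam_feasible withC y -> potential (Q s) u y <= potential (Q s) u x.
Proof.
move=> ucont uagree; apply: (profile_max _ _ _ _ (PJmax s)).
- by apply: pcontinuous_sumR => q hq; exact: ucont.
- exact: jam_feasible_closed.
- exact: jam_feasible_agree.
- move=> x y xy; apply: sumR_ext => q hq; apply: uagree => j hj; exact: xy.
- move=> x q j hx hq hj; exact: (jam_feasible_box withC x q j hx hq hj).
Qed.

Lemma feas_nonneg pJ q a b : feas s pJ q a b -> nonneg b.
Proof. by move=> [_ [_ hb]] j hj; have [] := hb j hj. Qed.

Lemma feas_full_power withC x q : jam_feasible withC x -> (q < Q s)%coq_nat ->
  feas s (fun j r => x r j) q (Pmax s q) (x q).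
Proof.
move=> hx hq; have [_ [_ [_ [huser _]]]] := Hs; have [hP _] := huser q hq.
split; [lra | split; [lra | move=> j hj]].
split; first by have [] := jam_feasible_box withC x q j hx hq hj.
rewrite (sumR_ext _ _ (fun r => x r j)); first by have [_ [hbud _]] := hx; exact: hbud.
by move=> r _; case: Nat.eqb_spec => // ->.
Qed.

Lemma feas_deviate withC x q a b : jam_feasible withC x -> (q < Q s)%coq_nat ->
  feas s (fun j r => x r j) q a b -> (withC -> Cq s q b) ->
  jam_feasible withC (deviate x q b).
Proof.
move=> [hnn [_ hC]] hq [_ [_ hb]] hCb; rewrite /deviate; split; [|split].
- move=> r j hr hj; case: Nat.eqb; [by have [] := hb j hj | exact: hnn].
- move=> j hj; rewrite (sumR_ext _ _ (fun r => if Nat.eqb r q then b j else x r j)).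
    by have [] := hb j hj.
  by move=> r _; case: Nat.eqb.
- move=> r hr hwith; case: Nat.eqb_spec => [->|_]; [exact: hCb | exact: hC].
Qed.

Lemma maximizer_best_jamming withC u x q a b :
  jam_feasible withC x ->
  (forall y, jam_feasible withC y -> potential (Q s) u y <= potential (Q s) u x) ->
  (q < Q s)%coq_nat -> feas s (fun j r => x r j) q a b -> (withC -> Cq s q b) ->
  u q b <= u q (x q).
Proof.
move=> hx xmax hq hab hCb; apply: (potential_maximizer_stable _ u _ x q b xmax hq).
exact: (feas_deviate withC x q a b hx hq hab hCb).
Qed.

Lemma rs_le_full_power q a b : (q < Q s)%coq_nat -> 0 <= a <= Pmax s q -> nonneg b ->
  rs s q a b <= rs s q (Pmax s q) b.
Proof.
move=> hq ha hb; rewrite /rs !rs_tilde_gap.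
apply: gap_pos_part_mono => //; [exact: alpha_nonneg | exact: beta_nonneg].
Qed.

Lemma rs_tilde_le_full_power q a b : (q < Q s)%coq_nat -> 0 <= a <= Pmax s q ->
  nonneg b -> Cq s q b -> rs_tilde s q a b <= rs_tilde s q (Pmax s q) b.
Proof.
move=> hq ha hb /(Cq_iff q b hq hb) hC; rewrite !rs_tilde_gap.
by apply: gap_mono => //; split => //; exact: beta_nonneg.
Qed.

(** (a) Maximizing the sum of the full-power secrecy rates gives a GNE of G. *)
Lemma GNE_G_exists : exists p pJ, GNE_G s p pJ.
Proof.
have [_ [_ [_ [_ hjam]]]] := Hs.
have zero_feasible : jam_feasible False (fun _ _ => 0).
  split; [by move=> *; lra | split => // j hj].
  by rewrite sumR_zero; have [hPJ _] := hjam j hj; lra.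
have [x [hx xmax]] := potential_maximizer False util pcontinuous_util util_agree
  (ex_intro _ _ zero_feasible).
exists (Pmax s), (fun j r => x r j) => q hq.
split; first exact: (feas_full_power False).
move=> a b hab; have hb := feas_nonneg _ _ _ _ hab.
have [ha0 [haP _]] := hab.
apply: Rle_trans (rs_le_full_power q a b hq (conj ha0 haP) hb) _.
have hxq : nonneg (x q) by move=> j hj; have [] := jam_feasible_box False x q j hx hq hj.
rewrite /rs -(util_sm_nonneg q b hb) -(util_sm_nonneg q (x q) hxq).
exact: (maximizer_best_jamming False util x q a b hx xmax hq hab (False_ind _)).
Qed.

(** (b) With the constraints (C_q), maximizing the sum of the full-power
    modified rates over the nonempty set P gives a GNE of G^sm. *)
Lemma GNE_Gsm_exists : (exists p pJ, in_P s p pJ) -> exists p pJ, GNE_Gsm s p pJ.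
Proof.
move=> [p0 [pJ0 [hP0 hJ0]]].
have P_feasible : jam_feasible True (fun r j => pJ0 j r).
  split; [|split].
  - by move=> r j hr hj; have [hnn _] := hJ0 j hj; exact: hnn.
  - by move=> j hj; have [_ hbud] := hJ0 j hj.
  - by move=> r hr _; have [_ [_ hC]] := hP0 r hr.
have [x [hx xmax]] := potential_maximizer True util_sm pcontinuous_util_sm
  util_sm_agree (ex_intro _ _ P_feasible).
exists (Pmax s), (fun j r => x r j) => q hq.
have hxq : nonneg (x q) by move=> j hj; have [] := jam_feasible_box True x q j hx hq hj.
have hCx : Cq s q (x q) by have [_ [_ hC]] := hx; exact: hC.
split; first by split; [exact: (feas_full_power True) | exact: hCx].
move=> a b [hab hCb]; have hb := feas_nonneg _ _ _ _ hab.
have [ha0 [haP _]] := hab.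
apply: Rle_trans (rs_tilde_le_full_power q a b hq (conj ha0 haP) hb hCb) _.
rewrite -(util_sm_nonneg q b hb) -(util_sm_nonneg q (x q) hxq).
exact: (maximizer_best_jamming True util_sm x q a b hx xmax hq hab (fun _ => hCb)).
Qed.

(** (c) A GNE of G satisfying all (C_q) is a GNE of G^sm: there the
    equilibrium rates are nonnegative, so [rs] and [rs_tilde] coincide. *)
Lemma GNE_G_to_Gsm p pJ : GNE_G s p pJ ->
  (forall q, (q < Q s)%coq_nat -> Cq s q (fun j => pJ j q)) -> GNE_Gsm s p pJ.
Proof.
move=> hG hC q hq; have [hfeas hopt] := hG q hq.
split; first by split; [exact: hfeas | exact: hC].
move=> a b [hab _]; have := hopt a b hab.
have hb := feas_nonneg _ _ _ _ hfeas; have [hp0 _] := hfeas.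
have hrate0 : 0 <= rs_tilde s q (p q) (fun j => pJ j q).
  rewrite rs_tilde_gap -(gap0 (alpha q (fun j => pJ j q)) (beta q (fun j => pJ j q))).
  apply: gap_mono; last lra.
  by split; [exact: beta_nonneg | apply/Cq_iff => //; exact: hC].
rewrite /rs (Rmax_right _ _ hrate0); have := Rmax_r 0 (rs_tilde s q a b); lra.
Qed.

(** (d) A GNE of G^sm is a GNE of G: a deviation with positive secrecy rate
    has a stronger legitimate link, hence satisfies (C_q) and is admissible
    in G^sm. *)
Lemma GNE_Gsm_to_G p pJ : GNE_Gsm s p pJ -> GNE_G s p pJ.
Proof.
move=> hsm q hq; have [[hfeas _] hopt] := hsm q hq.
split=> // a b hab; rewrite /rs; apply: Rmax_lub; first exact: Rmax_l.
have [hle|hpos] := Rle_lt_dec (rs_tilde s q a b) 0.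
  by apply: Rle_trans hle _; exact: Rmax_l.
apply: Rle_trans (Rmax_r 0 _); apply: hopt; split=> //.
have hb := feas_nonneg _ _ _ _ hab; have [ha0 _] := hab.
apply/Cq_iff => //; apply: Rlt_le; rewrite rs_tilde_gap in hpos.
apply: (gap_pos _ _ a) => //; exact: alpha_nonneg.
Qed.

End JammingGame.

Theorem proposition1 (s : sys) (Hs : admissible s) :
  (exists p pJ, GNE_G s p pJ) /\
  ((exists p pJ, in_P s p pJ) -> exists p pJ, GNE_Gsm s p pJ) /\
  (forall p pJ, GNE_G s p pJ ->
     (forall q, (q < Q s)%coq_nat -> Cq s q (fun j => pJ j q)) -> GNE_Gsm s p pJ) /\
  (forall p pJ, GNE_Gsm s p pJ -> GNE_G s p pJ).
Proof.
split; first exact: GNE_G_exists.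
split; first exact: GNE_Gsm_exists.
split; [exact: GNE_G_to_Gsm | exact: GNE_Gsm_to_G].
Qed.
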